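(* For integers $a\ge 1$ and $n\ge 2$, the modified wheel graph $\overline{W}_n$ satisfies $$t(\overline{W}_n)=a\,W_{n-1}(a).$$ In particular, for $a=1$, $t(W_n)=L_{2n}-2$, where $L_k$ is the $k$-th Lucas number.
   Context: $t(H)$ is the number of spanning trees of $H$. The cycle graph $C_n$ ($n\ge 2$) has vertices $p_1,\dots,p_n$ and edges joining $p_i$ to $p_{i+1}$ (indices mod $n$; $C_2$ has two parallel edges). The modified wheel graph $\overline{W}_n$ is obtained from $C_n$ by adding a new vertex $p$ joined to each vertex $p_j$ by $a\ge 1$ parallel edges; for $a=1$ it is the wheel graph $W_n$. The polynomials $W_n(x)$ are defined by $W_0(x)=1$, $W_1(x)=x+4$, $W_n(x)=(x+2)W_{n-1}(x)-W_{n-2}(x)+2$ for $n\ge 2$. Lucas numbers: $L_1=1$, $L_2=3$, $L_k=L_{k-1}+L_{k-2}$. *)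

From HB Require Import structures.
From mathcomp Require Import all_boot all_order all_algebra.
Set Implicit Arguments. Unset Strict Implicit. Unset Printing Implicit Defensive.
Import Order.TTheory GRing.Theory Num.Theory.

(** A finite multigraph: a finite vertex type [V], a finite edge type [E]
    and an endpoint map [ends : E -> V * V] (parallel edges allowed). *)

Definition adj_in (V E : finType) (ends : E -> V * V) (S : {set E}) : rel V :=
  fun x y => [exists e in S, (ends e == (x, y)) || (ends e == (y, x))].

Definition connected_in (V E : finType) (ends : E -> V * V) (S : {set E}) : bool :=
  [forall x : V, forall y : V, connect (adj_in ends S) x y].

(** S is (the edge set of) a spanning tree: (V,S) is connected and minimally
    so, i.e. connected with every edge a bridge (= connected and acyclic). *)
Definition spanning_tree (V E : finType) (ends : E -> V * V) (S : {set E}) : bool :=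
  connected_in ends S && [forall e in S, ~~ connected_in ends (S :\ e)].

Definition num_spanning_trees (V E : finType) (ends : E -> V * V) : nat :=
  #|[set S : {set E} | spanning_tree ends S]|.

(** Modified wheel graph: vertices [None] = hub p, [Some j] = p_{j+1};
    edges [inl i] : p_{i+1} -- p_{i+2} (indices mod n),
          [inr (j,k)] : k-th of the a parallel edges hub -- p_{j+1}. *)
Definition wheel_V (n : nat) : finType := option 'I_n.
Definition wheel_E (a n : nat) : finType := ('I_n + ('I_n * 'I_a))%type.

Definition wheel_ends (a n : nat) (e : wheel_E a n) : wheel_V n * wheel_V n :=
  match e with
  | inl i => (Some i, Some (ordS i))
  | inr jk => (None, Some jk.1)
  end.

Definition t_wheel (a n : nat) : nat := num_spanning_trees (@wheel_ends a n).

Local Open Scope ring_scope.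
Fixpoint Wpoly (n : nat) : {poly int} :=
  match n with
  | 0%N => 1
  | 1%N => 'X + 4%:P
  | S ((S m) as k) => ('X + 2%:P) * Wpoly k - Wpoly m + 2%:P
  end.
Local Close Scope ring_scope.

Fixpoint lucas (k : nat) : nat :=
  match k with
  | 0 => 2
  | 1 => 1
  | S ((S m) as j) => lucas j + lucas m
  end.

From HB Require Import structures.
From mathcomp Require Import all_boot all_order all_algebra.
From mathcomp Require Import zify ring.
From Stdlib Require Import Classical_Prop ClassicalEpsilon.
Import Order.TTheory GRing.Theory Num.Theory.
Set Implicit Arguments. Unset Strict Implicit. Unset Printing Implicit Defensive.

(* Transfer-matrix count.  Label each rim vertex by 0 or 1 according to whether
   its maximal rim arc has already met its hub edge strictly before it.  The local
   rules between consecutive vertices can be satisfied for an edge set S exactly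
   when S is a spanning tree, with a unique labelling, or S is the bare rim cycle,
   with two constant labellings.  Hence t(W_n) + 2 counts the pairs (S, labelling);
   summing first over the local choice at each vertex (rim edge or not, subset of
   the a hub edges) turns this count into tr M^n for the transfer matrix
   M = [[a+1, a], [1, 1]].  As tr M = a + 2 and det M = 1, the traces obey
   T_(k+2) = (a+2) T_(k+1) - T_k, the recurrence of a W_(k-1)(a) + 2, and for
   a = 1 they are the even-indexed Lucas numbers. *)

Notation shift k := (iter k (@ordS _)).

Section CyclicShift.
Variable n : nat.
Implicit Types u v w : 'I_n.

Lemma shift_val k v : val (shift k v) = (v + k) %% n.
Proof.
elim: k => [|k IHk]; first by rewrite addn0 modn_small.
by rewrite iterS /= IHk -addn1 modnDml addn1 addnS.
Qed.

Lemma shift_cover u w : exists2 k, k < n & shift k u = w.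
Proof.
have n_gt0 : 0 < n by apply: leq_ltn_trans (ltn_ord u).
exists ((w + n - u) %% n); first by rewrite ltn_mod.
apply: val_inj; rewrite shift_val modnDmr.
have -> : u + (w + n - u) = w + n by have := ltn_ord u; lia.
by rewrite modnDr modn_small.
Qed.

Lemma ordS_closed (P : 'I_n -> Prop) u v :
  (forall i, P i -> P (ordS i)) -> P u -> P v.
Proof.
move=> PS Pu; have [k _ <-] := shift_cover u v.
by elim: k => [|k IHk] //=; apply: PS.
Qed.

Lemma ordS_coclosed (P : 'I_n -> Prop) u v :
  (forall i, P (ordS i) -> P i) -> P u -> P v.
Proof.
move=> PS Pu; have [k _ vk] := shift_cover v u.
by elim: k v vk => [|k IHk] v; [move=> /= -> | rewrite iterSr => /IHk /PS].
Qed.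

End CyclicShift.

Section Multigraph.
Variables (V E : finType) (ends : E -> V * V).
Implicit Types (S : {set E}) (e : E).

Lemma adj_in_sym S : symmetric (adj_in ends S).
Proof.
by move=> x y; apply/existsP/existsP => -[e /andP[eS xy]]; exists e; rewrite eS orbC.
Qed.

Lemma adj_in_ends S e : e \in S -> adj_in ends S (ends e).1 (ends e).2.
Proof. by move=> eS; apply/existsP; exists e; rewrite eS -surjective_pairing eqxx. Qed.

Lemma connect_in_sym S x y :
  connect (adj_in ends S) x y = connect (adj_in ends S) y x.
Proof. exact/sym_connect_sym/adj_in_sym. Qed.

Lemma connect_invariant (e : rel V) (P : V -> Prop) x y :
  (forall x y, e x y -> P x -> P y) -> connect e x y -> P x -> P y.
Proof.
move=> Pe /connectP[p]; elim: p x => [|z p IHp] x /=; first by move=> _ ->.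
by case/andP=> xz zp yp Px; apply: IHp zp yp _; apply: Pe xz Px.
Qed.

Lemma connected_in_star S c :
  (forall x, connect (adj_in ends S) x c) -> connected_in ends S.
Proof.
move=> to_c; apply/forallP => x; apply/forallP => y.
by apply: connect_trans (to_c x) _; rewrite connect_in_sym.
Qed.

Lemma connected_in_setD1 S e : connected_in ends S ->
  connect (adj_in ends (S :\ e)) (ends e).1 (ends e).2 -> connected_in ends (S :\ e).
Proof.
move=> conS conSe; apply/forallP => x; apply/forallP => y.
apply: connect_sub (forallP (forallP conS x) y) => u w /existsP[f /andP[fS uw]].
case: (eqVneq f e) fS uw => [-> _ | fe fS uw].
  by case/orP=> /eqP ends_e; rewrite ends_e in conSe; rewrite // connect_in_sym.
by apply: connect1; apply/existsP; exists f; rewrite !inE fe fS.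
Qed.

Lemma spanning_tree_bridge S e : spanning_tree ends S -> e \in S ->
  ~~ connect (adj_in ends (S :\ e)) (ends e).1 (ends e).2.
Proof.
case/andP=> conS /forall_inP/(_ e) bridge eS; apply: contra (bridge eS).
exact: connected_in_setD1.
Qed.

End Multigraph.

Lemma prodn_bool (I : finType) (B : pred I) : \prod_(i : I) (B i : nat) = [forall i, B i].
Proof.
have [allB | /forallPn[i notBi]] := boolP [forall i, B i].
  by rewrite big1 // => i _; rewrite (forallP allB).
by rewrite (bigD1 i) //= (negbTE notBi).
Qed.

Section ClosedWalks.

Definition ffun_cons (T : Type) k (z : T) (g : {ffun 'I_k -> T}) : {ffun 'I_k.+1 -> T} :=
  [ffun i => if unlift ord0 i is Some j then g j else z].

Lemma ffun_cons0 (T : Type) k z (g : {ffun 'I_k -> T}) : ffun_cons z g ord0 = z.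
Proof. by rewrite ffunE unlift_none. Qed.

Lemma ffun_consS (T : Type) k z (g : {ffun 'I_k -> T}) j : ffun_cons z g (lift ord0 j) = g j.
Proof. by rewrite ffunE liftK. Qed.

Lemma ordS_lift0 k (j : 'I_k.+1) :
  j != ord_max -> ordS (lift ord0 j) = lift ord0 (ordS j) :> 'I_k.+2.
Proof.
move=> jmax; have j_lt_k : j < k by move: jmax (ltn_ord j); rewrite -val_eqE /=; lia.
by apply: val_inj; rewrite /= /bump /= !add1n !modn_small //; lia.
Qed.

Lemma lift0_eq_max k (j : 'I_k.+1) : (lift ord0 j == ord_max :> 'I_k.+2) = (j == ord_max).
Proof. by rewrite -!val_eqE /= /bump /= add1n eqSS. Qed.

Local Open Scope ring_scope.

Lemma sum_ffunS (R : nmodType) (T : finType) k (F : {ffun 'I_k.+1 -> T} -> R) :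
  \sum_f F f = \sum_(z : T) \sum_(g : {ffun 'I_k -> T}) F (ffun_cons z g).
Proof.
rewrite pair_bigA (reindex (fun p : T * {ffun 'I_k -> T} => ffun_cons p.1 p.2)) //=.
exists (fun f => (f ord0, [ffun j => f (lift ord0 j)])) => [[z g] _ | f _] /=.
  by rewrite ffun_cons0; congr pair; apply/ffunP => j; rewrite ffunE ffun_consS.
by apply/ffunP => i; rewrite ffunE; case: unliftP => [j -> | ->]; rewrite ?ffunE.
Qed.

Variables (R : comPzSemiRingType) (m : nat) (A : 'M[R]_m.+1).

(* [ffun_cons x g] lists the first k+1 vertices of a walk of length k+1 from [x]
   to [y]. *)
Lemma mxpow_walks k x y : (A ^+ k.+1) x y = \sum_(g : {ffun 'I_k -> 'I_m.+1})
  \prod_(i < k.+1) A (ffun_cons x g i) (if i == ord_max then y else ffun_cons x g (ordS i)).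
Proof.
elim: k x y => [|k IHk] x y.
  under eq_bigr => g _ do rewrite big_ord1 ffun_cons0 /=.
  by rewrite expr1 sumr_const card_ffun !card_ord expn0.
rewrite exprS -mulmxE mxE sum_ffunS; apply: eq_bigr => z _.
rewrite IHk mulr_sumr; apply: eq_bigr => g _.
have ordS0 : ordS ord0 = lift ord0 ord0 :> 'I_k.+2 by apply: val_inj; rewrite /= modn_small.
rewrite [RHS]big_ord_recl ffun_cons0 ordS0 ffun_consS ffun_cons0; congr (_ * _).
apply: eq_bigr => j _; rewrite ffun_consS lift0_eq_max.
by case: eqP => // /eqP jmax; rewrite ordS_lift0 // ffun_consS.
Qed.

Lemma mxtrace_pow_walks k : \tr (A ^+ k.+1) =
  \sum_(f : {ffun 'I_k.+1 -> 'I_m.+1}) \prod_(i < k.+1) A (f i) (f (ordS i)).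
Proof.
rewrite sum_ffunS; apply: eq_bigr => x _; rewrite mxpow_walks; apply: eq_bigr => g _.
apply: eq_bigr => i _; case: eqP => // ->; congr (A _ _).
by rewrite (_ : ordS ord_max = ord0) ?ffun_cons0 //; apply: val_inj; rewrite /= modnn.
Qed.

End ClosedWalks.

Section LinearRecurrences.
Local Open Scope ring_scope.

Lemma eq_rec2 (R : pzRingType) (t : R) (u v : nat -> R) :
    u 0 = v 0 -> u 1 = v 1 ->
    (forall k, u k.+2 = t * u k.+1 - u k) -> (forall k, v k.+2 = t * v k.+1 - v k) ->
  u =1 v.
Proof.
move=> u0 u1 u_rec v_rec k; suff : u k = v k /\ u k.+1 = v k.+1 by case.
by elim: k => [|k [uk uSk]] //; rewrite u_rec v_rec uk uSk.
Qed.

Lemma mxtrace_pow_rec (R : comNzRingType) m (A : 'M[R]_m.+1) t k :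
  A * A = t *: A - 1 -> \tr (A ^+ k.+2) = t * \tr (A ^+ k.+1) - \tr (A ^+ k).
Proof.
by move=> AA; rewrite !exprSr -mulrA AA mulrBr mulr1 -scalerAr -exprSr raddfB /= mxtraceZ.
Qed.

End LinearRecurrences.

Section Wheel.
Variables a n : nat.
Local Notation E := (wheel_E a n).
Local Notation ends := (@wheel_ends a n).
Local Notation adj S := (adj_in ends S).
Implicit Types (S : {set E}) (i u v w : 'I_n).

Definition rim S i : bool := inl i \in S.

Definition spokes S v : {set 'I_a} := [set k | inr (v, k) \in S].

Definition rim_cycle : {set E} := [set e : E | if e is inl _ then true else false].

Definition rim_reach S u v :=
  exists2 k, (forall j, j < k -> rim S (shift j u)) & shift k u = v.

Lemma rim_setD1_spoke S v k i : rim (S :\ inr (v, k)) i = rim S i.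
Proof. by rewrite /rim !inE. Qed.

Lemma rim_setD1_rim S i0 i : rim (S :\ inl i0) i = (i != i0) && rim S i.
Proof. by rewrite /rim !inE. Qed.

Lemma spokes_gt0 S v k : inr (v, k) \in S -> 0 < #|spokes S v|.
Proof. by move=> vkS; apply/card_gt0P; exists k; rewrite inE. Qed.

Lemma rim_cycleP S :
  reflect ((forall i, rim S i) /\ (forall v, #|spokes S v| = 0)) (S == rim_cycle).
Proof.
apply: (iffP eqP) => [-> | [allR noSp]].
  split=> [i | v]; first by rewrite /rim inE.
  by apply/eqP; rewrite cards_eq0; apply/eqP/setP => k; rewrite !inE.
apply/setP => -[i | [v k]]; rewrite inE; first exact: allR.
by apply/negbTE; apply: contra_eqN (noSp v) => /spokes_gt0; rewrite lt0n.
Qed.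

Lemma adj_rim S i : rim S i -> adj S (Some i) (Some (ordS i)).
Proof. exact: (adj_in_ends ends (e := inl i)). Qed.

Lemma adj_spoke S v k : inr (v, k) \in S -> adj S None (Some v).
Proof. exact: (adj_in_ends ends (e := inr (v, k))). Qed.

Lemma wheel_disconnected S (X : 'I_n -> Prop) v :
    (forall i, rim S i -> X i -> X (ordS i)) ->
    (forall i, rim S i -> X (ordS i) -> X i) ->
    (forall w k, inr (w, k) \in S -> ~ X w) ->
  X v -> ~~ connected_in ends S.
Proof.
move=> XS XP noSp Xv; apply/negP => /forallP/(_ (Some v))/forallP/(_ None).
pose P x := if x is Some w then X w else False.
move/(connect_invariant (P := P)); apply=> // x y /existsP[[i | [w k]] /andP[eS]].
  by case/orP=> /eqP[<- <-]; [apply: XS | apply: XP].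
by case/orP=> /eqP[<- <-] //= /(noSp _ _ eS).
Qed.

Lemma rim_reach_refl S u : rim_reach S u u.
Proof. by exists 0. Qed.

Lemma rim_reach_cons S u v : rim S u -> rim_reach S (ordS u) v -> rim_reach S u v.
Proof.
move=> Ru [k Rk <-]; exists k.+1; last by rewrite iterSr.
by case=> [|j] // /Rk; rewrite iterSr.
Qed.

Lemma rim_reach_rcons S u v : rim_reach S u v -> rim S v -> rim_reach S u (ordS v).
Proof.
move=> [k Rk <-] Rv; exists k.+1; last by rewrite iterS.
by move=> j; rewrite ltnS leq_eqVlt => /predU1P[-> // | /Rk].
Qed.

Lemma rim_reach_behead S u v :
  rim_reach S u v -> u != v -> rim S u /\ rim_reach S (ordS u) v.
Proof.
move=> [[|k] Rk <-]; first by rewrite eqxx.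
split; first exact: (Rk 0).
by exists k => [j /(Rk j.+1) | ]; rewrite -iterSr.
Qed.

Lemma rim_reach_belast S u v :
  rim_reach S u (ordS v) -> u != ordS v -> rim S v /\ rim_reach S u v.
Proof.
move=> [[|k] Rk]; first by move=> <-; rewrite eqxx.
rewrite iterS => /ordS_inj <- _; split; first exact: Rk.
by exists k => // j /ltnW /Rk.
Qed.

Lemma rim_reach_mono S S' u v :
  (forall i, rim S i -> rim S' i) -> rim_reach S u v -> rim_reach S' u v.
Proof. by move=> sub [k Rk <-]; exists k => // j /Rk /sub. Qed.

Lemma rim_reach_connect S u v :
  rim_reach S u v -> connect (adj S) (Some u) (Some v).
Proof.
move=> [k Rk <-]; elim: k Rk => [|k IHk] Rk; first exact: connect0.
apply: connect_trans (IHk (fun j jk => Rk j (ltnW jk))) (connect1 _).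
by rewrite iterS; apply/adj_rim/Rk.
Qed.

(* A shortest rim path from [u] to [v] meets [v] only at its end, hence avoids the
   rim edge leaving [v]. *)
Lemma rim_reach_avoid S u v : rim_reach S u v -> rim_reach (S :\ inl v) u v.
Proof.
case=> k; elim/ltn_ind: k => k IHk Rk uv.
have [[j j_lt_k] /= /eqP ujv | never_v] := pickP (fun j : 'I_k => shift j u == v).
  apply: (IHk j j_lt_k) ujv => i i_lt_j.
  exact/Rk/(ltn_trans i_lt_j).
exists k => // j j_lt_k; rewrite rim_setD1_rim Rk // andbT.
by have /= -> := never_v (Ordinal j_lt_k).
Qed.

(* [s i = 1] records that the maximal rim arc through [i] receives its hub edge
   strictly before [i]; [arc_step r c (s i) (s (i+1))] is the transition across
   vertex [i], where [r] says whether the rim edge [i -- i+1] is present and [c]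
   is the number of hub edges at [i]. *)
Definition arc_step (r : bool) (c x y : nat) : bool :=
  if r then (x + c <= 1) && (y == x + c) else (x + c == 1) && (y == 0).

Definition arc_labelling S (s : 'I_n -> nat) : bool :=
  [forall i, arc_step (rim S i) #|spokes S i| (s i) (s (ordS i))].

Section Labelling.
Variables (S : {set E}) (s : 'I_n -> nat).
Hypothesis lab : arc_labelling S s.

Lemma labelling_le1 i : s i + #|spokes S i| <= 1.
Proof.
by have := forallP lab i; rewrite /arc_step; case: rim => /andP[+ _] => [// | /eqP ->].
Qed.

Lemma labelling_rim i : rim S i -> s (ordS i) = s i + #|spokes S i|.
Proof. by move=> Ri; have := forallP lab i; rewrite /arc_step Ri => /andP[_ /eqP]. Qed.

Lemma labelling_gap i : ~~ rim S i -> s i + #|spokes S i| = 1 /\ s (ordS i) = 0.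
Proof.
by move/negbTE=> Ri; have := forallP lab i; rewrite /arc_step Ri => /andP[/eqP -> /eqP].
Qed.

Lemma labelling_reach_le u v : rim_reach S u v -> s u <= s v.
Proof.
case=> k; elim: k v => [|k IHk] v Rk <- //.
rewrite iterS labelling_rim; last exact: Rk.
exact: leq_trans (IHk _ (fun j jk => Rk j (ltnW jk)) erefl) (leq_addr _ _).
Qed.

Lemma labelling_reach_lt u v :
  rim_reach S u v -> u != v -> s u + #|spokes S u| <= s v.
Proof.
by move=> uv /(rim_reach_behead uv)[Ru /labelling_reach_le]; rewrite labelling_rim.
Qed.

Lemma labelling_spokes_reach u v :
  rim_reach S u v -> 0 < #|spokes S u| -> 0 < #|spokes S v| -> u = v.
Proof.
move=> uv cu cv; apply/eqP; apply: contraT => /(labelling_reach_lt uv) le_uv.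
by have := labelling_le1 v; lia.
Qed.

Lemma labelling_all_rim : (forall i, rim S i) -> S == rim_cycle.
Proof.
move=> allR; apply/rim_cycleP; split=> // w; apply/eqP; apply: contraT; rewrite -lt0n => cw.
have pos_all i : 0 < s i.
  apply: (ordS_closed (P := fun i => 0 < s i) (u := ordS w)) => [j |];
  by rewrite labelling_rim //; lia.
by have := labelling_le1 w; have := pos_all w; lia.
Qed.

Lemma labelling_connected : S != rim_cycle -> connected_in ends S.
Proof.
move=> notC; apply: (connected_in_star (c := None)) => -[v |]; last exact: connect0.
apply: contraNT notC => v_off.
pose off w := ~~ connect (adj S) (Some w) None.
have off_spokes w : off w -> #|spokes S w| = 0.
  rewrite /off; apply: contraNeq; rewrite -lt0n => /card_gt0P[k]; rewrite inE => /adj_spoke.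
  by rewrite adj_in_sym => /connect1.
have off_succ i : rim S i -> off i -> off (ordS i).
  rewrite /off => /adj_rim /connect1 Ri; apply: contra; exact: connect_trans.
have off_pred i : rim S i -> off (ordS i) -> off i.
  rewrite /off => /adj_rim; rewrite adj_in_sym => /connect1 Ri.
  by apply: contra; exact: connect_trans.
apply: labelling_all_rim.
have [s0 | s1] : s v = 0 \/ s v = 1 by have := labelling_le1 v; lia.
- pose Y w := off w /\ s w = 0.
  have Y_rim w : Y w -> rim S w.
    by case=> /off_spokes cw sw; apply: contraT => /labelling_gap[]; rewrite cw sw.
  have Y_succ w : Y w -> Y (ordS w).
    move=> Yw; have [offw sw] := Yw; have Rw := Y_rim w Yw.
    by split; [exact: off_succ | rewrite labelling_rim // off_spokes // sw].
  by move=> i; apply/Y_rim/(ordS_closed (P := Y) (u := v)).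
- pose Y w := off w /\ s w = 1.
  have Y_rim i : Y (ordS i) -> rim S i.
    by case=> _ si; apply: contraT => /labelling_gap[_]; rewrite si.
  have Y_pred i : Y (ordS i) -> Y i.
    move=> Yi; have [offSi sSi] := Yi; have Ri := Y_rim i Yi.
    have offi := off_pred i Ri offSi.
    by split=> //; move: sSi; rewrite labelling_rim // off_spokes // addn0.
  by move=> i; apply/Y_rim/(ordS_coclosed (P := Y) (u := v)).
Qed.

Lemma labelling_spoke_bridge w k0 :
  inr (w, k0) \in S -> ~~ connected_in ends (S :\ inr (w, k0)).
Proof.
move=> w_k0S; have cw := spokes_gt0 w_k0S.
apply: (wheel_disconnected (X := fun v => rim_reach S v w \/ rim_reach S w v) (v := w)).
- move=> i; rewrite rim_setD1_spoke => Ri [iw | wi]; last by right; apply: rim_reach_rcons.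
  have [<- | neq_iw] := eqVneq i w; last by left; case: (rim_reach_behead iw neq_iw).
  by right; apply: rim_reach_rcons (rim_reach_refl _ _) Ri.
- move=> i; rewrite rim_setD1_spoke => Ri [Siw | wSi]; first by left; apply: rim_reach_cons.
  have [-> | neq_wSi] := eqVneq w (ordS i).
    by left; apply: rim_reach_rcons (rim_reach_refl _ _) Ri.
  by right; case: (rim_reach_belast wSi neq_wSi).
- move=> v k; rewrite !inE => /andP[neq_vk vkS]; have cv := spokes_gt0 vkS.
  have [eq_vw | neq_vw] := eqVneq v w; last first.
    case=> reach; case/eqP: neq_vw; first exact: labelling_spokes_reach reach cv cw.
    exact/esym/(labelling_spokes_reach reach cw cv).
  subst v; have : 1 < #|spokes S w|.
    apply/card_gt1P; exists k, k0; rewrite !inE vkS w_k0S; split=> //.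
    by apply: contra neq_vk => /eqP ->.
  by have := labelling_le1 w; lia.
- by left; apply: rim_reach_refl.
Qed.

Lemma labelling_rim_bridge i0 : rim S i0 -> ~~ connected_in ends (S :\ inl i0).
Proof.
move=> Ri0; set T := S :\ inl i0.
have rimT i : rim T i -> i != i0 /\ rim S i by rewrite rim_setD1_rim => /andP.
have reachT u v : rim_reach T u v -> rim_reach S u v.
  by apply: rim_reach_mono => i /rimT[].
have := labelling_le1 i0; rewrite -labelling_rim // => s_i0S.
have [s_i0S_1 | s_i0S_0] : s (ordS i0) = 1 \/ s (ordS i0) = 0 by lia.
- apply: (wheel_disconnected (X := rim_reach T (ordS i0)) (v := ordS i0)).
  + by move=> i Ri reach_i; apply: rim_reach_rcons.
  + move=> i /rimT[neq_ii0 _] reach_Si; apply: (proj2 (rim_reach_belast reach_Si _)).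
    by rewrite (inj_eq (@ordS_inj _)) eq_sym.
  + move=> v k; rewrite !inE => /andP[_ /spokes_gt0 cv] /reachT /labelling_reach_le.
    by have := labelling_le1 v; lia.
  + exact: rim_reach_refl.
- apply: (wheel_disconnected (X := rim_reach T ^~ i0) (v := i0)).
  + by move=> i /rimT[neq_ii0 _] reach_i; apply: (proj2 (rim_reach_behead reach_i neq_ii0)).
  + by move=> i Ri reach_Si; apply: rim_reach_cons.
  + move=> v k; rewrite !inE => /andP[_ /spokes_gt0 cv] /reachT reach_v.
    move: s_i0S_0; rewrite labelling_rim //.
    have [eq_vi0 | neq_vi0] := eqVneq v i0; first by move: cv; rewrite eq_vi0; lia.
    by have := labelling_reach_lt reach_v neq_vi0; lia.
  + exact: rim_reach_refl.
Qed.

Lemma labelling_spanning_tree : S != rim_cycle -> spanning_tree ends S.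
Proof.
move=> notC; apply/andP; split; first exact: labelling_connected.
apply/forall_inP => -[i | [w k]] eS; [exact: labelling_rim_bridge | exact: labelling_spoke_bridge].
Qed.

End Labelling.

Lemma labelling_unique S s s' :
  arc_labelling S s -> arc_labelling S s' -> S != rim_cycle -> s =1 s'.
Proof.
move=> lab lab' notC; have [i gap] : exists i, ~~ rim S i.
  apply/existsP; apply: contraR notC => /existsPn allR.
  by apply: (labelling_all_rim lab) => i; apply/negPn/allR.
move=> v; apply: (ordS_closed (P := fun v => s v = s' v) (u := ordS i)) => [j sj|].
  have [Rj | gapj] := boolP (rim S j).
    by rewrite (labelling_rim lab Rj) (labelling_rim lab' Rj) sj.
  by rewrite (labelling_gap lab gapj).2 (labelling_gap lab' gapj).2.
by rewrite (labelling_gap lab gap).2 (labelling_gap lab' gap).2.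
Qed.

End Wheel.

Section SpanningTree.
Variables a n : nat.
Local Notation E := (wheel_E a n).
Local Notation ends := (@wheel_ends a n).
Implicit Types (S : {set E}) (i u v w : 'I_n).

Definition downstream_of_spoke S v :=
  exists2 u, 0 < #|spokes S u| & rim S u /\ rim_reach S (ordS u) v.

Lemma downstream_of_spokeS S v : downstream_of_spoke S (ordS v) <->
  rim S v /\ (downstream_of_spoke S v \/ 0 < #|spokes S v|).
Proof.
split=> [[u cu [Ru reach]] | [Rv [[u cu [Ru reach]] | cv]]].
- have [/ordS_inj eq_uv | neq] := eqVneq (ordS u) (ordS v).
    by rewrite -eq_uv; split; [|right].
  by have [Rv reach_v] := rim_reach_belast reach neq; split; [|left; exists u].
- by exists u => //; split=> //; apply: rim_reach_rcons.
- by exists v => //; split=> //; apply: rim_reach_refl.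
Qed.

Variable S : {set E}.
Hypothesis tree : spanning_tree ends S.

Lemma tree_spoke_unique u k1 v k2 : inr (u, k1) \in S -> inr (v, k2) \in S ->
  rim_reach S u v -> (u, k1) = (v, k2).
Proof.
move=> u_k1S v_k2S reach.
apply: contraNeq (spanning_tree_bridge tree v_k2S) => neq /=.
apply: (connect_trans (connect1 (adj_spoke (v := u) (k := k1) _))).
  by rewrite !inE u_k1S andbT; apply: contra neq => /eqP[-> ->].
apply/rim_reach_connect/(rim_reach_mono _ reach) => i.
by rewrite rim_setD1_spoke.
Qed.

Lemma tree_spokes_le1 v : #|spokes S v| <= 1.
Proof.
rewrite leqNgt; apply/card_gt1P => -[k1 [k2 []]]; rewrite !inE => k1S k2S.
by have [->] := tree_spoke_unique k1S k2S (rim_reach_refl _ _); rewrite eqxx.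
Qed.

Lemma tree_downstream_spokes v : downstream_of_spoke S v -> #|spokes S v| = 0.
Proof.
case=> u /card_gt0P[k1]; rewrite inE => u_k1S [Ru reach].
apply/eqP; apply: contraTT (spanning_tree_bridge tree Ru); rewrite negbK.
rewrite -lt0n => /card_gt0P[k2]; rewrite inE => v_k2S.
have [eq_uv _] := tree_spoke_unique u_k1S v_k2S (rim_reach_cons Ru reach).
subst u; rewrite /= connect_in_sym; exact/rim_reach_connect/rim_reach_avoid.
Qed.

Lemma tree_gap_downstream v :
  ~~ rim S v -> downstream_of_spoke S v \/ 0 < #|spokes S v|.
Proof.
move=> gap; apply: NNPP => /not_or_and[not_down cv].
case/andP: tree => + _; apply/negP.
apply: (wheel_disconnected (X := rim_reach S ^~ v) (v := v)).
- move=> i Ri reach; have neq_iv : i != v by apply: contraNneq gap => <-.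
  exact: (proj2 (rim_reach_behead reach neq_iv)).
- by move=> i Ri reach; apply: rim_reach_cons.
- move=> w k /spokes_gt0 cw reach; have [eq_wv | neq_wv] := eqVneq w v.
    by apply: cv; rewrite -eq_wv.
  by apply: not_down; exists w => //; apply: rim_reach_behead reach neq_wv.
- exact: rim_reach_refl.
Qed.

Lemma tree_labelling : exists s, arc_labelling S s.
Proof.
pose s v := if excluded_middle_informative (downstream_of_spoke S v) then 1 else 0.
have s1 v : downstream_of_spoke S v -> s v = 1.
  by rewrite /s; case: excluded_middle_informative.
have s0 v : ~ downstream_of_spoke S v -> s v = 0.
  by rewrite /s; case: excluded_middle_informative.
have met v : downstream_of_spoke S v \/ 0 < #|spokes S v| -> s v + #|spokes S v| = 1.
  case: (classic (downstream_of_spoke S v)) => [d _ | nd [// | cv]].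
    by rewrite s1 // tree_downstream_spokes.
  by rewrite s0 //; have := tree_spokes_le1 v; lia.
have unmet v : ~ (downstream_of_spoke S v \/ 0 < #|spokes S v|) -> s v + #|spokes S v| = 0.
  by case/not_or_and=> nd /negP; rewrite s0 // lt0n negbK => /eqP.
exists s; apply/forallP => i; rewrite /arc_step.
have [to_succ of_succ] := downstream_of_spokeS S i.
have [Ri | gap] := boolP (rim S i); last first.
  rewrite met ?s0 ?eqxx //; last exact: tree_gap_downstream.
  by case/to_succ; rewrite (negbTE gap).
case: (classic (downstream_of_spoke S i \/ 0 < #|spokes S i|)) => [met_i | unmet_i].
  by rewrite met // s1 //; apply: of_succ.
by rewrite unmet // s0 // => /to_succ[_].
Qed.

End SpanningTree.

Section Counting.
Variables a n : nat.
Hypothesis n_gt0 : 0 < n.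
Local Notation E := (wheel_E a n).
Local Notation ends := (@wheel_ends a n).
Implicit Types (S : {set E}) (f : {ffun 'I_n -> 'I_2}).

Definition labellings S := [set f : {ffun 'I_n -> 'I_2} | arc_labelling S (fun v => f v)].

Lemma arc_labelling_ext S s s' : s =1 s' -> arc_labelling S s = arc_labelling S s'.
Proof. by move=> eq_s; apply: eq_forallb => i; rewrite !eq_s. Qed.

Lemma rim_cycle_not_spanning_tree : ~~ spanning_tree ends (rim_cycle a n).
Proof.
apply: contraTN (wheel_disconnected (S := rim_cycle a n) (X := fun=> True)
  (v := Ordinal n_gt0) _ _ _ _) => //; first by rewrite negbK => /andP[].
by move=> w k; rewrite inE.
Qed.

Lemma labellings_rim_cycle :
  labellings (rim_cycle a n) = [set [ffun=> ord0]; [ffun=> ord_max]].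
Proof.
have [allR noSp] := rim_cycleP (rim_cycle a n) (eqxx _).
apply/setP => f; rewrite !inE; apply/idP/idP => [lab | /orP[] /eqP ->]; last first.
- by apply/forallP => i; rewrite /arc_step allR noSp !ffunE.
- by apply/forallP => i; rewrite /arc_step allR noSp !ffunE.
have f_const v : f v = f (Ordinal n_gt0).
  apply: (ordS_closed (P := fun v => f v = f (Ordinal n_gt0))) => // i fi.
  by apply/val_inj; rewrite /= (labelling_rim lab) // noSp addn0 -fi.
apply/orP; case: (f (Ordinal n_gt0)) f_const => -[|[|//]] ? f_const; [left | right];
  by apply/eqP/ffunP => v; rewrite f_const ffunE; apply: val_inj.
Qed.

Lemma card_labellings S :
  #|labellings S| = spanning_tree ends S + (S == rim_cycle a n).*2.
Proof.
have [-> | notC] := eqVneq S (rim_cycle a n).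
  rewrite (negbTE rim_cycle_not_spanning_tree) labellings_rim_cycle cards2.
  by case: eqP => // /ffunP/(_ (Ordinal n_gt0)); rewrite !ffunE.
rewrite addn0; have [tree | not_tree] := boolP (spanning_tree ends S); last first.
  apply/eqP; rewrite cards_eq0; apply/eqP/setP => f; rewrite !inE.
  by apply: contraNF not_tree => /labelling_spanning_tree; apply.
have [s lab] := tree_labelling tree.
pose f0 := [ffun v => inord (s v) : 'I_2].
have f0E v : f0 v = s v :> nat.
  by rewrite ffunE inordK // ltnS; apply: leq_trans (leq_addr _ _) (labelling_le1 lab v).
suff -> : labellings S = [set f0] by rewrite cards1.
apply/setP => f; rewrite !inE; apply/idP/eqP => [lab_f | ->].
  apply/ffunP => v; apply: val_inj; rewrite /= f0E.
  exact: labelling_unique lab_f lab notC v.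
by rewrite (arc_labelling_ext _ f0E).
Qed.

Lemma sum_card_labellings : \sum_S #|labellings S| = (t_wheel a n).+2.
Proof.
under eq_bigr do rewrite card_labellings.
rewrite big_split /= -addn2; congr (_ + _).
  rewrite /t_wheel /num_spanning_trees -sum1dep_card [RHS]big_mkcond /=.
  by apply: eq_bigr => S _; case: spanning_tree.
rewrite (bigD1 (rim_cycle a n)) //= eqxx big1 // => S.
by move/negbTE ->.
Qed.

End Counting.

Section TransferCount.
Variable a : nat.

Definition transfer_count (x y : 'I_2) : nat :=
  \sum_(d : bool * {set 'I_a}) arc_step d.1 #|d.2| x y.

Lemma sum_arc_step r x y k b : (forall c, arc_step r c x y = (c == k) && b) ->
  \sum_(p : {set 'I_a}) arc_step r #|p| x y = b * 'C(a, k).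
Proof.
case: b => Pc; last by rewrite big1 // => p _; rewrite Pc andbF.
rewrite mul1n -[a in 'C(a, _)]card_ord -card_draws -sum1dep_card [RHS]big_mkcond /=.
by apply: eq_bigr => p _; rewrite Pc andbT; case: eqP.
Qed.

Lemma transfer_count_entries :
  [/\ transfer_count ord0 ord0 = a.+1, transfer_count ord0 ord_max = a,
      transfer_count ord_max ord0 = 1 & transfer_count ord_max ord_max = 1].
Proof.
have split_rim x y : transfer_count x y =
    \sum_(p : {set 'I_a}) arc_step true #|p| x y + \sum_(p : {set 'I_a}) arc_step false #|p| x y.
  rewrite /transfer_count -(pair_bigA _ (fun r (p : {set 'I_a}) => arc_step r #|p| x y : nat)).
  by rewrite big_bool.
split; rewrite split_rim.
- rewrite (sum_arc_step (k := 0) (b := true)) ?(sum_arc_step (k := 1) (b := true));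
    try by case=> [|[]].
  by rewrite bin0 bin1 !mul1n add1n.
- rewrite (sum_arc_step (k := 1) (b := true)) ?(sum_arc_step (k := 1) (b := false));
    try by case=> [|[]].
  by rewrite bin1 mul1n addn0.
- rewrite (sum_arc_step (k := 0) (b := false)) ?(sum_arc_step (k := 0) (b := true));
    try by case=> [|[]].
  by rewrite bin0.
- rewrite (sum_arc_step (k := 0) (b := true)) ?(sum_arc_step (k := 0) (b := false));
    try by case=> [|[]].
  by rewrite bin0.
Qed.

End TransferCount.

Section Transfer.
Variables a n : nat.
Local Notation E := (wheel_E a n).

Definition wheel_edges_of (g : {ffun 'I_n -> bool * {set 'I_a}}) : {set E} :=
  [set e : E | match e with inl i => (g i).1 | inr (v, k) => k \in (g v).2 end].

Lemma wheel_edges_of_bij : bijective wheel_edges_of.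
Proof.
exists (fun S => [ffun i => (rim S i, spokes S i)]) => [g | S].
  apply/ffunP => i; rewrite ffunE /rim /spokes inE [RHS]surjective_pairing.
  by congr pair; apply/setP => k; rewrite !inE.
by apply/setP => -[i | [v k]]; rewrite inE ffunE //= inE.
Qed.

Lemma sum_mem_labellings (f : {ffun 'I_n -> 'I_2}) :
  \sum_(S : {set E}) (f \in labellings S) = \prod_i transfer_count a (f i) (f (ordS i)).
Proof.
rewrite (reindex wheel_edges_of) /=; last by apply: onW_bij; apply: wheel_edges_of_bij.
rewrite bigA_distr_bigA; apply: eq_bigr => g _; rewrite prodn_bool inE.
congr (nat_of_bool _); apply: eq_forallb => i; congr arc_step; first by rewrite /rim inE.
by apply: eq_card => k; rewrite !inE.
Qed.

Lemma sum_card_labellings_transfer :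
  \sum_(S : {set E}) #|labellings S| =
  \sum_(f : {ffun 'I_n -> 'I_2}) \prod_i transfer_count a (f i) (f (ordS i)).
Proof.
under eq_bigr do rewrite -sum1_card big_mkcond /=.
rewrite exchange_big; apply: eq_bigr => f _; rewrite -sum_mem_labellings.
by apply: eq_bigr => S _; case: (f \in _).
Qed.

End Transfer.

Lemma lucas_rec k : lucas (2 * k.+2) + lucas (2 * k) = 3 * lucas (2 * k.+1).
Proof.
have -> : 2 * k.+2 = (2 * k).+4 by rewrite !mulnS.
have -> : 2 * k.+1 = (2 * k).+2 by rewrite mulnS.
by move: (2 * k) => j /=; lia.
Qed.

Local Open Scope ring_scope.

Section TransferMatrix.
Variable a : nat.

Definition transfer_mx : 'M[int]_2 := \matrix_(x, y) (transfer_count a x y)%:R.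

Lemma transfer_mx_sqr : transfer_mx * transfer_mx = (a%:R + 2) *: transfer_mx - 1.
Proof.
have [c00 c01 c10 c11] := transfer_count_entries a.
apply/matrixP => i j; rewrite -mulmxE !mxE !big_ord_recl big_ord0 !mxE.
have ord2 (x : 'I_2) : x = ord0 \/ x = ord_max.
  by case: x => -[|[|//]] x2; [left | right]; apply: val_inj.
have -> : lift ord0 ord0 = ord_max :> 'I_2 by apply: val_inj.
by case: (ord2 i) => ->; case: (ord2 j) => ->; rewrite /= ?c00 ?c01 ?c10 ?c11 -?natr1; ring.
Qed.

Lemma mxtrace_transfer_rec k :
  \tr (transfer_mx ^+ k.+2) = (a%:R + 2) * \tr (transfer_mx ^+ k.+1) - \tr (transfer_mx ^+ k).
Proof. exact/mxtrace_pow_rec/transfer_mx_sqr. Qed.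

Lemma mxtrace_transfer0 : \tr (transfer_mx ^+ 0) = 2.
Proof. by rewrite expr0 mxtrace1. Qed.

Lemma mxtrace_transfer1 : \tr (transfer_mx ^+ 1) = a%:R + 2.
Proof.
have [c00 _ _ c11] := transfer_count_entries a.
rewrite expr1 /mxtrace !big_ord_recl big_ord0 !mxE.
rewrite (_ : lift ord0 ord0 = ord_max :> 'I_2) ?c00 ?c11 -?natr1; last exact: val_inj.
by ring.
Qed.

Lemma mxtrace_transfer_Wpoly k :
  \tr (transfer_mx ^+ k.+1) = a%:R * (Wpoly k).[a%:R] + 2.
Proof.
pose w k := if k is k'.+1 then a%:R * (Wpoly k').[a%:R] + 2 else 2 : int.
apply: (eq_rec2 (t := a%:R + 2) (v := w) _ _ mxtrace_transfer_rec) (k.+1).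
- exact: mxtrace_transfer0.
- by rewrite mxtrace_transfer1 /w /= hornerC; ring.
- by case=> [|k'] /=; rewrite !(hornerD, hornerN, hornerM, hornerX, hornerC); ring.
Qed.

End TransferMatrix.

Lemma mxtrace_transfer1_lucas k : \tr (transfer_mx 1 ^+ k) = (lucas (2 * k)%N)%:R.
Proof.
apply: (eq_rec2 (v := fun k => (lucas (2 * k)%N)%:R) _ _ (@mxtrace_transfer_rec 1)) => //.
- exact: mxtrace_transfer0.
- by rewrite mxtrace_transfer1.
- move=> j; apply/eqP; rewrite eq_sym subr_eq -[X in _ == X]natrD lucas_rec natrM.
  by apply/eqP; ring.
Qed.

Lemma t_wheel_trace a n : (0 < n)%N -> (t_wheel a n)%:Z = \tr (transfer_mx a ^+ n) - 2.
Proof.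
case: n => // k _; apply/eqP; rewrite eq_sym subr_eq -natz -natrD addn2.
rewrite -(sum_card_labellings a (ltn0Sn k)) sum_card_labellings_transfer mxtrace_pow_walks.
rewrite natr_sum; apply/eqP/eq_bigr => f _; rewrite natr_prod.
by apply: eq_bigr => i _; rewrite mxE.
Qed.

Theorem theorem5p10 :
  (forall a n : nat, (1 <= a)%N -> (2 <= n)%N ->
     (t_wheel a n)%:Z = a%:Z * (Wpoly n.-1).[a%:Z]) /\
  (forall n : nat, (2 <= n)%N ->
     (t_wheel 1 n)%:Z = (lucas (2 * n))%:Z - 2).
Proof.
split=> [a [|k] // _ _ | [|k] // _]; rewrite t_wheel_trace //.
  by rewrite mxtrace_transfer_Wpoly addrK natz.
by rewrite mxtrace_transfer1_lucas natz.
Qed.
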